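(* Let $R$ be a finitely generated integral $\mathbb{K}$-algebra with an effective, pointed grading by a finitely generated abelian group $K$, let $(\pi,\mathrm{id}_K)\colon S=\mathbb{K}[T_1,\dots,T_r]\to R$ be a minimal presentation, $I:=\ker\pi$, $G:=\operatorname{Aut}_K(S)$, $V:=\bigoplus_{w\in\Omega_S}S_w$ and $I_V:=I\cap V$. Then $\pi$ induces an isomorphism of vector spaces $V/I_V\to\bigoplus_{w\in\Omega_R}R_w$. Moreover, $I_V$ is invariant under $\operatorname{Stab}_I(G)$, giving an induced representation $\varrho\colon\operatorname{Stab}_I(G)\to\operatorname{GL}(V/I_V)$, and $\varrho(\operatorname{Stab}_I(G))\cong\operatorname{Aut}_K(R)$.
   Context: $\mathbb{K}$ algebraically closed of characteristic zero. $\operatorname{Aut}_K(\cdot)$ denotes graded automorphisms $(\varphi,\psi)$ ($\psi\in\operatorname{Aut}(K)$, $\varphi(R_w)=R_{\psi(w)}$); $G$ acts on $S$ by $f\mapsto\varphi(f)$ and $\operatorname{Stab}_I(G)=\{g\in G;\ g\cdot I=I\}$. Effective/pointed: the weight monoid generates $K$, degree-zero part is $\mathbb{K}$, and the cone generated by the weight monoid in $K\otimes\mathbb{Q}$ contains no line. Minimal presentation: graded epimorphism $(\pi,\kappa)$ from a $K$-graded polynomial ring with homogeneous variables, $\kappa$ a group isomorphism, $\ker\pi\subseteq\langle T_1,\dots,T_r\rangle^2$. Generator degrees: $\Omega_R:=\{w;\ R_w\ne0,\ R_w\not\subseteq R_{<w}\}$, where $R_{<w}$ is the subalgebra generated by all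 $R_{w'}$ with $w'<w$, and $w'\le w$ iff $w-w'$ lies in the weight monoid; similarly $\Omega_S$ (and $\Omega_S=\Omega_R$). *)

From HB Require Import structures.
From mathcomp Require Import all_boot all_order all_algebra.
From mathcomp Require Import mpoly.
Set Implicit Arguments. Unset Strict Implicit. Unset Printing Implicit Defensive.
Import Order.TTheory GRing.Theory Num.Theory.
Local Open Scope ring_scope.

Section GradedAlgebras.
Variables (F : fieldType) (K : zmodType) (A : comAlgType F).
Implicit Types (comp : K -> A -> A) (w : K) (x y : A).

(* x lies in the homogeneous component A_w (comp w is the projection to A_w) *)
Definition ishom comp w x : Prop := comp w x = x.

Definition is_grading comp : Prop :=
  [/\ (forall w (a : F) x y, comp w (a *: x + y) = a *: comp w x + comp w y),
      (forall x, exists s : seq K, [/\ uniq s, x = \sum_(w <- s) comp w x &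
                                   forall w, w \notin s -> comp w x = 0]),
      (forall w w' x, comp w (comp w' x) = if w == w' then comp w' x else 0) &
      (forall u v x y, ishom comp u x -> ishom comp v y ->
                       ishom comp (u + v) (x * y))].

Definition weight comp w : Prop := exists x, x != 0 /\ ishom comp w x.

Definition wle comp (w' w : K) : Prop := weight comp (w - w').
Definition wlt comp (w' w : K) : Prop := wle comp w' w /\ w' <> w.

Inductive gen_subalg (P : A -> Prop) : A -> Prop :=
| gs_scal (c : F) : gen_subalg P (c%:A)
| gs_gen x : P x -> gen_subalg P x
| gs_add x y : gen_subalg P x -> gen_subalg P y -> gen_subalg P (x + y)
| gs_mul x y : gen_subalg P x -> gen_subalg P y -> gen_subalg P (x * y).

Definition Alt comp w : A -> Prop :=
  gen_subalg (fun x => exists w', wlt comp w' w /\ ishom comp w' x).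

Definition Omega comp w : Prop :=
  (exists x, x != 0 /\ ishom comp w x) /\
  (exists x, ishom comp w x /\ ~ Alt comp w x).

Definition dsum_over comp (P : K -> Prop) x : Prop :=
  forall w, ~ P w -> comp w x = 0.

Definition effective comp : Prop :=
  forall k : K, exists (s : seq K) (c : K -> int),
    (forall w, w \in s -> weight comp w) /\ k = \sum_(w <- s) w *~ c w.

(* v (x) 1 lies in the cone generated by the weight monoid in K (x) Q:
   M v - (sum of weights) is torsion for some M > 0 *)
Definition in_cone comp (v : K) : Prop :=
  exists (M N : nat) (s : seq K), [/\ (0 < M)%N, (0 < N)%N,
    (forall w, w \in s -> weight comp w) &
    (v *+ M - \sum_(w <- s) w) *+ N = 0].

(* pointed: A_0 = F, and the cone contains no line *)
Definition pointed comp : Prop :=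
  (forall x, ishom comp 0 x -> exists c : F, x = c%:A) /\
  (forall v : K, in_cone comp v -> in_cone comp (- v) ->
     exists N : nat, (0 < N)%N /\ v *+ N = 0).

Definition graded_aut comp (phi : A -> A) (psi : K -> K) : Prop :=
  [/\ [/\ (forall (a : F) x y, phi (a *: x + y) = a *: phi x + phi y),
          (forall x y, phi (x * y) = phi x * phi y), phi 1 = 1 & bijective phi],
      [/\ (forall u v, psi (u + v) = psi u + psi v) & bijective psi] &
      (forall w x, ishom comp (psi w) x <-> exists y, ishom comp w y /\ phi y = x)].

End GradedAlgebras.

Definition fingen_group (K : zmodType) : Prop :=
  exists s : seq K, forall k : K, exists c : K -> int, k = \sum_(w <- s) w *~ c w.

Definition integral_ring (R : nzRingType) : Prop :=
  forall x y : R, x * y = 0 -> x = 0 \/ y = 0.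

(* grading of S = F[T_1..T_r] with deg T_i = Q i *)
Definition mdegK (K : zmodType) (r : nat) (Q : 'I_r -> K) (m : 'X_{1..r}) : K :=
  \sum_(i < r) Q i *+ m i.

Definition compS (F : fieldType) (K : zmodType) (r : nat) (Q : 'I_r -> K)
  (w : K) (p : {mpoly F[r]}) : {mpoly F[r]} :=
  \sum_(m <- msupp p | mdegK Q m == w) p@_m *: 'X_[m].

Definition min_presentation (F : fieldType) (K : zmodType) (R : comAlgType F)
  (compR : K -> R -> R) (r : nat) (Q : 'I_r -> K) (pi : {mpoly F[r]} -> R) : Prop :=
  [/\ [/\ (forall (a : F) p q, pi (a *: p + q) = a *: pi p + pi q),
          (forall p q, pi (p * q) = pi p * pi q) & pi 1 = 1],
      (forall x, exists p, pi p = x),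
      (forall w p, ishom (compS Q) w p -> ishom compR w (pi p)) &
      (* ker pi is contained in <T_1,...,T_r>^2 *)
      (forall p, pi p = 0 -> forall m, m \in msupp p -> (2 <= mdeg m)%N)].

Definition in_stab (F : fieldType) (K : zmodType) (R : comAlgType F) (r : nat)
  (Q : 'I_r -> K) (pi : {mpoly F[r]} -> R)
  (g : ({mpoly F[r]} -> {mpoly F[r]}) * (K -> K)) : Prop :=
  [/\ graded_aut (compS Q) g.1 g.2,
      (forall f, pi f = 0 -> pi (g.1 f) = 0) &
      (forall f, pi f = 0 -> exists f', pi f' = 0 /\ g.1 f' = f)].

Definition paircomp (T U : Type) (g h : (T -> T) * (U -> U)) : (T -> T) * (U -> U) :=
  (g.1 \o h.1, g.2 \o h.2).
Definition paireq (T U : Type) (g h : (T -> T) * (U -> U)) : Prop :=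
  (forall x, g.1 x = h.1 x) /\ (forall k, g.2 k = h.2 k).

From HB Require Import structures.
From mathcomp Require Import all_boot all_order all_algebra.
From mathcomp Require Import mpoly.
Import GRing.Theory.
Local Open Scope ring_scope.

Set Implicit Arguments. Unset Strict Implicit. Unset Printing Implicit Defensive.

(** Since [ker pi] lies in <T_1,...,T_r>^2, the classes [pi T_i] are nonzero
   and not scalar.  Pointedness then forbids a nonconstant monomial of degree
   0: otherwise some [deg T_j] would be torsion, a power of [pi T_j] would lie
   in [R_0], the ground field, and [pi T_j] would be a scalar because [R] is an
   integral algebra over an algebraically closed field.  Consequently every
   monomial of total degree at least 2 in [S_w] lies in [S_{<w}], so both
   [Omega_S] and [Omega_R] are the set of the degrees [deg T_i], and [pi] maps
   [V] onto the sum of the [R_w], [w] in [Omega_R].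

   A graded automorphism [(phi, psi)] of [R] lifts to the substitution sending
   [T_i] to a homogeneous preimage of [phi (pi T_i)].  Composing the lifts of
   [phi] and [phi^-1] gives a substitution [T_i |-> T_i + f_i] with [f_i] in
   [I], homogeneous of degree [deg T_i]; as the monomials of [f_i] have total
   degree at least 2, the variables occurring in [f_i] have degrees strictly
   below [deg T_i] in the order of the weight monoid, so this substitution is
   unitriangular, hence invertible, and the lift is an automorphism.  Finally
   two elements of [Stab_I(G)] induce the same automorphism of [R] iff they
   agree modulo [I] on the variables, i.e. on [V]; the [K]-parts then agree
   because the weight monoid generates [K]. *)

Lemma big_uniq_if_eq (V : nmodType) (I : eqType) (s : seq I) j (f : I -> V) :
  uniq s -> \sum_(i <- s) (if i == j then f i else 0) = if j \in s then f j else 0.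
Proof.
move=> us; case: ifP => js.
  by rewrite (bigD1_seq j) //= eqxx big1 ?addr0 // => i /negbTE ->.
by rewrite big_seq big1 // => i ii; case: eqP => // ij; move: js; rewrite -ij ii.
Qed.

Lemma bij_of_comp_bij (T U : Type) (g : T -> U) (h : U -> T) :
  bijective (g \o h) -> bijective (h \o g) -> bijective g.
Proof.
case=> k1 _ gh_k1 [k2 k2_hg _].
have g_inj : injective g by move=> x y e; rewrite -[x]k2_hg -[y]k2_hg /= e.
by exists (h \o k1) => [x|y]; [apply: g_inj; exact: (gh_k1 (g x)) | exact: gh_k1].
Qed.

Section AdditiveMaps.
Variables (K L : zmodType) (psi : K -> L).
Hypothesis psiD : forall u v, psi (u + v) = psi u + psi v.

Lemma additive0 : psi 0 = 0.
Proof. by apply: (addrI (psi 0)); rewrite -psiD !addr0. Qed.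

Lemma additiveN u : psi (- u) = - psi u.
Proof. by apply/eqP; rewrite -subr_eq0 opprK -psiD addNr additive0. Qed.

Lemma additiveB u v : psi (u - v) = psi u - psi v.
Proof. by rewrite psiD additiveN. Qed.

Lemma additiveMn u n : psi (u *+ n) = psi u *+ n.
Proof. by elim: n => [|n IH]; rewrite ?mulr0n ?additive0 // !mulrS psiD IH. Qed.

Lemma additiveMz u z : psi (u *~ z) = psi u *~ z.
Proof. by case: z => n; rewrite ?NegzE ?mulrNz -!pmulrn ?additiveN additiveMn. Qed.

Lemma additive_sum I (s : seq I) (P : pred I) (g : I -> K) :
  psi (\sum_(i <- s | P i) g i) = \sum_(i <- s | P i) psi (g i).
Proof. by elim/big_rec2: _ => [|i y1 y2 _ <-]; rewrite ?additive0 ?psiD. Qed.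

End AdditiveMaps.

Definition ahom (F : fieldType) (A B : comAlgType F) (f : A -> B) :=
  [/\ (forall (a : F) x y, f (a *: x + y) = a *: f x + f y),
      (forall x y, f (x * y) = f x * f y) & f 1 = 1].

Section AlgebraMorphisms.
Variables (F : fieldType) (A B : comAlgType F) (f : A -> B).
Hypothesis hf : ahom f.

Lemma ahomD x y : f (x + y) = f x + f y.
Proof. by case: hf => h _ _; have := h 1 x y; rewrite !scale1r. Qed.

Lemma ahom0 : f 0 = 0.
Proof. by apply: (addrI (f 0)); rewrite -ahomD !addr0. Qed.

Lemma ahomZ a x : f (a *: x) = a *: f x.
Proof. by case: hf => h _ _; have := h a x 0; rewrite !addr0 ahom0 addr0. Qed.

Lemma ahomN x : f (- x) = - f x.
Proof. by rewrite -scaleN1r ahomZ scaleN1r. Qed.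

Lemma ahomB x y : f (x - y) = f x - f y.
Proof. by rewrite ahomD ahomN. Qed.

Lemma ahomM x y : f (x * y) = f x * f y.
Proof. by case: hf. Qed.

Lemma ahom1 : f 1 = 1.
Proof. by case: hf. Qed.

Lemma ahom_alg (c : F) : f c%:A = c%:A.
Proof. by rewrite ahomZ ahom1. Qed.

Lemma ahom_sum I (s : seq I) (P : pred I) (g : I -> A) :
  f (\sum_(i <- s | P i) g i) = \sum_(i <- s | P i) f (g i).
Proof. by elim/big_rec2: _ => [|i y1 y2 _ <-]; rewrite ?ahom0 ?ahomD. Qed.

Lemma ahom_prod I (s : seq I) (P : pred I) (g : I -> A) :
  f (\prod_(i <- s | P i) g i) = \prod_(i <- s | P i) f (g i).
Proof. by elim/big_rec2: _ => [|i y1 y2 _ <-]; rewrite ?ahom1 ?ahomM. Qed.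

Lemma ahomX x k : f (x ^+ k) = f x ^+ k.
Proof. by elim: k => [|k IH]; rewrite ?expr0 ?ahom1 // !exprS ahomM IH. Qed.

End AlgebraMorphisms.

Lemma ahom_comp (F : fieldType) (A B C : comAlgType F) (f : A -> B) (g : B -> C) :
  ahom f -> ahom g -> ahom (g \o f).
Proof.
move=> hf hg; split => [a x y|x y|] /=.
- by case: hf => -> _ _; case: hg => -> _ _.
- by rewrite (ahomM hf) (ahomM hg).
- by rewrite (ahom1 hf) (ahom1 hg).
Qed.

Lemma ahom_can (F : fieldType) (A B : comAlgType F) (f : A -> B) (g : B -> A) :
  ahom f -> cancel f g -> cancel g f -> ahom g.
Proof.
move=> hf fK gK; have f_inj := can_inj fK.
split => [a x y|x y|]; apply: f_inj.
- by rewrite gK; case: hf => -> _ _; rewrite !gK.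
- by rewrite gK (ahomM hf) !gK.
- by rewrite gK (ahom1 hf).
Qed.

Section AlgebraMorphismsOnMpoly.
Variables (F : fieldType) (r : nat) (A : comAlgType F).

Lemma ahom_mpolyE (f : {mpoly F[r]} -> A) : ahom f -> forall p,
  f p = \sum_(m <- msupp p) p@_m *: \prod_(i < r) f 'X_i ^+ m i.
Proof.
move=> hf p; rewrite {1}[p]mpolyE (ahom_sum hf); apply: eq_bigr => m _.
rewrite (ahomZ hf) mpolyXE_id (ahom_prod hf); congr (_ *: _).
by apply: eq_bigr => i _; rewrite (ahomX hf).
Qed.

Lemma ahom_mpoly_eq (f g : {mpoly F[r]} -> A) :
  ahom f -> ahom g -> (forall i, f 'X_i = g 'X_i) -> f =1 g.
Proof.
move=> hf hg fg p; rewrite (ahom_mpolyE hf) (ahom_mpolyE hg); apply: eq_bigr => m _.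
by congr (_ *: _); apply: eq_bigr => i _; rewrite fg.
Qed.

End AlgebraMorphismsOnMpoly.

Lemma ahom_comp_mpoly (F : fieldType) (r : nat) (t : r.-tuple {mpoly F[r]}) :
  ahom (comp_mpoly t).
Proof.
split => [a x y|x y|]; first by rewrite comp_mpolyD comp_mpolyZ.
  exact: rmorphM.
exact: comp_mpoly1.
Qed.

Lemma comp_mpolyXt (F : fieldType) (r : nat) (t : r.-tuple {mpoly F[r]}) i :
  'X_i \mPo t = tnth t i.
Proof. by rewrite comp_mpolyXU -tnth_nth. Qed.

Definition occurs (F : fieldType) (r : nat) (j : 'I_r) (p : {mpoly F[r]}) : bool :=
  has (fun m : 'X_{1..r} => 0 < m j)%N (msupp p).

Lemma comp_mpoly_eq_occurring (F : fieldType) (r : nat) (p : {mpoly F[r]})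
    (t t' : r.-tuple {mpoly F[r]}) :
  (forall j, occurs j p -> tnth t j = tnth t' j) ->
  p \mPo t = p \mPo t'.
Proof.
move=> tt'; rewrite !comp_mpolyE; apply: eq_big_seq => m hm; congr (_ *: _).
apply: eq_bigr => j _; case: (posnP (m j)) => [->|pj]; first by rewrite !expr0.
by rewrite tt' //; apply/hasP; exists m.
Qed.

Lemma ahom_range_mpoly (F : fieldType) (r : nat) (E : {mpoly F[r]} -> {mpoly F[r]}) p :
  ahom E ->
  (forall j, occurs j p -> exists q, E q = 'X_j) ->
  exists q, E q = p.
Proof.
move=> hE hX; pose rg a := exists q, E q = a.
have rgM a b : rg a -> rg b -> rg (a * b).
  by case=> q <- [q' <-]; exists (q * q'); rewrite (ahomM hE).
rewrite [p]mpolyE big_seq; apply: (big_ind rg) => [|a b|m hm].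
- by exists 0; rewrite (ahom0 hE).
- by case=> q <- [q' <-]; exists (q + q'); rewrite (ahomD hE).
suff [q <-] : rg 'X_[m] by exists (p@_m *: q); rewrite (ahomZ hE).
rewrite mpolyXE_id; apply: (big_ind rg) => // [|j _]; first by exists 1; rewrite (ahom1 hE).
case: (posnP (m j)) => [->|mj]; first by exists 1; rewrite (ahom1 hE) expr0.
have /hX [q <-] : occurs j p by apply/hasP; exists m.
by exists (q ^+ m j); rewrite (ahomX hE).
Qed.

Lemma mnm_neq0_split (r : nat) (m : 'X_{1..r}) :
  m != 0%MM -> exists j, m = (m - U_(j) + U_(j))%MM.
Proof.
move=> nm; have [j hj] : exists j, m j != 0%N.
  apply/existsP; apply: contraR nm => /existsPn h; apply/eqP/mnmP => i.
  by rewrite mnm0E; apply/eqP; move: (h i); rewrite negbK.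
by exists j; rewrite submK // lep1mP.
Qed.

Section IntegralRing.
Variables (R : nzRingType) (hR : integral_ring R).

Lemma integral_prod_eq0 (I : eqType) (s : seq I) (g : I -> R) :
  \prod_(i <- s) g i = 0 -> exists2 i, i \in s & g i = 0.
Proof.
elim: s => [|i s IH]; first by rewrite big_nil => /eqP; rewrite oner_eq0.
rewrite big_cons => /hR [gi0|/IH [j js gj0]]; first by exists i; rewrite ?mem_head.
by exists j; rewrite // in_cons js orbT.
Qed.

Lemma integral_expr_eq0 (x : R) k : x ^+ k = 0 -> x = 0.
Proof.
elim: k => [|k IH]; first by rewrite expr0 => /eqP; rewrite oner_eq0.
by rewrite exprS => /hR [//|/IH].
Qed.

End IntegralRing.

(* [X^N - c] splits over [F], and one of its linear factors vanishes at [x]. *)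
Lemma integral_root_of_scalar (F : closedFieldType) (A : comAlgType F) (x : A) N (c : F) :
  integral_ring A ->
  (0 < N)%N -> x ^+ N = c%:A -> exists z : F, x = z%:A.
Proof.
move=> hA N0 xNc; have [rs split_rs] := closed_field_poly_normal ('X^N - c%:P).
move: split_rs; rewrite lead_coefXnsubC // scale1r => split_rs.
have : horner_alg x ('X^N - c%:P) = 0.
  by rewrite rmorphB rmorphXn /= horner_algX horner_algC xNc subrr.
rewrite split_rs rmorph_prod /= => /(integral_prod_eq0 hA) [z _].
by rewrite rmorphB /= horner_algX horner_algC => /eqP; rewrite subr_eq0 => /eqP ->; exists z.
Qed.

Section GradedAlgebra.
Variables (F : fieldType) (K : zmodType) (A : comAlgType F) (comp : K -> A -> A).
Hypothesis hg : is_grading comp.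

Lemma grD w x y : comp w (x + y) = comp w x + comp w y.
Proof. by case: hg => h _ _ _; have := h w 1 x y; rewrite !scale1r. Qed.

Lemma gr0 w : comp w 0 = 0.
Proof. by apply: (addrI (comp w 0)); rewrite -grD !addr0. Qed.

Lemma grZ w a x : comp w (a *: x) = a *: comp w x.
Proof. by case: hg => h _ _ _; have := h w a x 0; rewrite !addr0 gr0 addr0. Qed.

Lemma grN w x : comp w (- x) = - comp w x.
Proof. by rewrite -scaleN1r grZ scaleN1r. Qed.

Lemma grB w x y : comp w (x - y) = comp w x - comp w y.
Proof. by rewrite grD grN. Qed.

Lemma gr_sum w I (s : seq I) (P : pred I) (f : I -> A) :
  comp w (\sum_(i <- s | P i) f i) = \sum_(i <- s | P i) comp w (f i).
Proof. by elim/big_rec2: _ => [|i y1 y2 _ <-]; rewrite ?gr0 ?grD. Qed.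

Lemma gr_comp w w' x : comp w (comp w' x) = if w == w' then comp w' x else 0.
Proof. by case: hg => _ _ h _; apply: h. Qed.

Lemma gr_decomp x : exists s : seq K, [/\ uniq s, x = \sum_(w <- s) comp w x &
                                         forall w, w \notin s -> comp w x = 0].
Proof. by case: hg => _ h _ _; apply: h. Qed.

Lemma ishomM u v x y : ishom comp u x -> ishom comp v y -> ishom comp (u + v) (x * y).
Proof. by case: hg => _ _ _ h; apply: h. Qed.

Lemma ishom0 w : ishom comp w 0.
Proof. exact: gr0. Qed.

Lemma ishom_comp w x : ishom comp w (comp w x).
Proof. by rewrite /ishom gr_comp eqxx. Qed.

Lemma comp_ishom u w x : ishom comp u x -> comp w x = if w == u then x else 0.
Proof. by move=> h; rewrite -h gr_comp h. Qed.

Lemma ishomD w x y : ishom comp w x -> ishom comp w y -> ishom comp w (x + y).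
Proof. by rewrite /ishom grD => -> ->. Qed.

Lemma ishomZ w a x : ishom comp w x -> ishom comp w (a *: x).
Proof. by rewrite /ishom grZ => ->. Qed.

Lemma ishomB w x y : ishom comp w x -> ishom comp w y -> ishom comp w (x - y).
Proof. by rewrite /ishom grB => -> ->. Qed.

Lemma ishom_sum w I (s : seq I) (P : pred I) (f : I -> A) :
  (forall i, P i -> ishom comp w (f i)) -> ishom comp w (\sum_(i <- s | P i) f i).
Proof.
move=> h; elim/big_rec: _ => [|i y Pi hy]; first exact: ishom0.
by apply: ishomD => //; apply: h.
Qed.

Lemma ishom_expS w x k : ishom comp w x -> ishom comp (w *+ k.+1) (x ^+ k.+1).
Proof.
move=> h; elim: k => [|k IH]; first by rewrite expr1 mulr1n.
by rewrite exprS mulrS; apply: ishomM.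
Qed.

Lemma ishom_uniq u v x : ishom comp u x -> ishom comp v x -> x != 0 -> u = v.
Proof.
move=> hu hv nx; case: (eqVneq v u) => [//|nuv].
by move: nx; rewrite -hv (comp_ishom v hu) (negbTE nuv) eqxx.
Qed.

Lemma ishom_of_comp w y : (forall u, u != w -> comp u y = 0) -> ishom comp w y.
Proof.
move=> h; have [s [us ey hs]] := gr_decomp y.
rewrite /ishom {2}ey (eq_bigr (fun u => if u == w then comp u y else 0)).
  by rewrite big_uniq_if_eq //; case: ifP => // /negbT /hs ->.
by move=> u _; case: eqP => // /eqP; apply: h.
Qed.

Lemma pointed_torsion_pow (hp : pointed comp) w x N :
  (0 < N)%N -> w *+ N = 0 -> ishom comp w x -> exists c : F, x ^+ N = c%:A.
Proof.
case: N => // N _ wN hx; case: hp => h0 _; apply: h0.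
by rewrite -wN; apply: ishom_expS.
Qed.

Lemma in_cone_weight w : weight comp w -> in_cone comp w.
Proof.
move=> hw; exists 1%N, 1%N, [:: w]; split => //; last by rewrite big_seq1 mulr1n subrr.
by move=> w'; rewrite mem_seq1 => /eqP ->.
Qed.

Lemma effective_additive_eq (he : effective comp) (psi1 psi2 : K -> K) :
  (forall u v, psi1 (u + v) = psi1 u + psi1 v) ->
  (forall u v, psi2 (u + v) = psi2 u + psi2 v) ->
  (forall w, weight comp w -> psi1 w = psi2 w) -> psi1 =1 psi2.
Proof.
move=> psi1D psi2D eqw k; have [s [c [hs ->]]] := he k.
rewrite (additive_sum psi1D) (additive_sum psi2D); apply: eq_big_seq => w ws.
by rewrite (additiveMz psi1D) (additiveMz psi2D) eqw //; apply: hs.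
Qed.

End GradedAlgebra.

Lemma comp_morph (F : fieldType) (K : zmodType) (A B : comAlgType F)
    (compA : K -> A -> A) (compB : K -> B -> B) (f : A -> B) (psi : K -> K) :
  is_grading compA -> is_grading compB -> ahom f -> injective psi ->
  (forall u y, ishom compA u y -> ishom compB (psi u) (f y)) ->
  forall u y, compB (psi u) (f y) = f (compA u y).
Proof.
move=> hA hB hf psi_inj fhom u y; have [s [us ey hs]] := gr_decomp hA y.
rewrite {1}ey (ahom_sum hf) (gr_sum hB).
rewrite (eq_bigr (fun u' => if u' == u then f (compA u' y) else 0)); last first.
  move=> u' _; rewrite (comp_ishom hB (u := psi u')); last exact/fhom/(ishom_comp hA).
  by rewrite (inj_eq psi_inj) eq_sym.
by rewrite big_uniq_if_eq //; case: ifP => // /negbT /hs ->; rewrite (ahom0 hf).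
Qed.

Section GradedAutomorphisms.
Variables (F : fieldType) (K : zmodType) (A : comAlgType F) (comp : K -> A -> A).
Hypothesis hg : is_grading comp.

Lemma graded_aut_of_bij (phi : A -> A) (psi : K -> K) :
  ahom phi -> bijective phi ->
  (forall u v, psi (u + v) = psi u + psi v) -> bijective psi ->
  (forall w y, ishom comp w y -> ishom comp (psi w) (phi y)) ->
  graded_aut comp phi psi.
Proof.
move=> hphi [phi' phiK phiK'] psiD [psi' psiK psiK'] phihom.
split; [by case: hphi; split => //; exists phi' | by split => //; exists psi' |].
move=> w x; split; last by case=> y [hy <-]; apply: phihom.
move=> hx; exists (phi' x); split => //; apply: (ishom_of_comp hg) => u nu.
have := comp_morph hg hg hphi (can_inj psiK) phihom u (phi' x).
rewrite phiK' (comp_ishom hg _ hx) (inj_eq (can_inj psiK)) (negbTE nu).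
by move=> /esym e; apply: (can_inj phiK); rewrite e (ahom0 hphi).
Qed.

Section GradedAut.
Variables (phi : A -> A) (psi : K -> K).
Hypothesis ga : graded_aut comp phi psi.

Lemma graded_aut_ahom : ahom phi.
Proof. by case: ga => [[h1 h2 h3 _] _ _]; split. Qed.

Lemma graded_aut_bij : bijective phi.
Proof. by case: ga => [[_ _ _ h] _ _]. Qed.

Lemma graded_aut_psiD u v : psi (u + v) = psi u + psi v.
Proof. by case: ga => _ [h _] _. Qed.

Lemma graded_aut_psi_bij : bijective psi.
Proof. by case: ga => _ [_ h] _. Qed.

Lemma graded_aut_hom w y : ishom comp w y -> ishom comp (psi w) (phi y).
Proof. by case: ga => _ _ h hy; apply/h; exists y. Qed.

Lemma graded_aut_pre w x : ishom comp (psi w) x -> exists y, ishom comp w y /\ phi y = x.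
Proof. by case: ga => _ _ h; move/h. Qed.

Lemma graded_aut_inj : injective phi.
Proof. exact: bij_inj graded_aut_bij. Qed.

Lemma graded_aut_psi_inj : injective psi.
Proof. exact: bij_inj graded_aut_psi_bij. Qed.

Lemma graded_aut_neq0 x : x != 0 -> phi x != 0.
Proof.
apply: contra => /eqP h; apply/eqP; apply: graded_aut_inj.
by rewrite h (ahom0 graded_aut_ahom).
Qed.

Lemma graded_aut_inv phi' psi' :
  cancel phi phi' -> cancel phi' phi -> cancel psi psi' -> cancel psi' psi ->
  graded_aut comp phi' psi'.
Proof.
move=> phiK phiK' psiK psiK'.
have psi'D u v : psi' (u + v) = psi' u + psi' v.
  by apply: graded_aut_psi_inj; rewrite graded_aut_psiD !psiK'.
apply: graded_aut_of_bij => //.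
- exact: ahom_can graded_aut_ahom phiK phiK'.
- by exists phi.
- by exists psi.
move=> w y; rewrite -[in ishom comp w y](psiK' w) => /graded_aut_pre [x [hx <-]].
by rewrite phiK.
Qed.

Lemma graded_aut_weight u : weight comp (psi u) <-> weight comp u.
Proof.
split.
  case=> x [nx hx]; have [y [hy ey]] := graded_aut_pre hx; exists y; split => //.
  by apply: contra nx => /eqP y0; rewrite -ey y0 (ahom0 graded_aut_ahom).
by case=> y [ny hy]; exists (phi y); split; [apply: graded_aut_neq0 | apply: graded_aut_hom].
Qed.

Lemma graded_aut_Alt w x : Alt comp (psi w) (phi x) -> Alt comp w x.
Proof.
case: graded_aut_bij => phi' phiK phiK'.
have hphi' : ahom phi' by apply: ahom_can graded_aut_ahom phiK phiK'.
case: graded_aut_psi_bij => psi' psiK psiK'.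
rewrite -{2}(phiK x).
elim => {x} [c|x [w' [[hw nw] hx]]|x y _ IHx _ IHy|x y _ IHx _ IHy].
- by rewrite (ahom_alg hphi'); apply: gs_scal.
- apply: gs_gen; exists (psi' w'); split; last first.
    rewrite -(psiK' w') in hx; have [y [hy <-]] := graded_aut_pre hx.
    by rewrite phiK.
  split; last by move=> e; apply: nw; rewrite -e psiK'.
  by rewrite /wle -graded_aut_weight (additiveB graded_aut_psiD) psiK'.
- by rewrite (ahomD hphi'); apply: gs_add.
- by rewrite (ahomM hphi'); apply: gs_mul.
Qed.

Lemma graded_aut_Omega w : Omega comp w -> Omega comp (psi w).
Proof.
case=> [[x [nx hx]] [y [hy ny]]]; split.
  by exists (phi x); split; [apply: graded_aut_neq0 | apply: graded_aut_hom].
by exists (phi y); split; [apply: graded_aut_hom | move/graded_aut_Alt].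
Qed.

End GradedAut.

End GradedAutomorphisms.

Section MonomialGrading.
Variables (F : fieldType) (K : zmodType) (r : nat) (Q : 'I_r -> K).
Local Notation dg := (mdegK Q).
Local Notation cS := (compS (F:=F) Q).

Lemma mdegKD m1 m2 : dg (m1 + m2)%MM = dg m1 + dg m2.
Proof. by rewrite /mdegK -big_split /=; apply: eq_bigr => i _; rewrite mnmDE mulrnDr. Qed.

Lemma mdegK0 : dg 0%MM = 0.
Proof. by rewrite /mdegK big1 // => i _; rewrite mnm0E mulr0n. Qed.

Lemma mdegKU i : dg U_(i)%MM = Q i.
Proof.
rewrite /mdegK (bigD1 i) //= mnm1E eqxx mulr1n big1 ?addr0 // => j /negbTE.
by rewrite mnm1E eq_sym => ->.
Qed.

Lemma compS_coef w p m : (cS w p)@_m = if dg m == w then p@_m else 0.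
Proof.
rewrite /compS -big_filter raddf_sum /=.
rewrite (eq_bigr (fun m' => if m' == m then p@_m' else 0)); last first.
  by move=> m' _; rewrite mcoeffZ mcoeffX; case: eqP; rewrite ?mulr1 ?mulr0.
rewrite big_uniq_if_eq ?filter_uniq ?msupp_uniq // mem_filter.
case: (dg m == w) => //=; case: ifP => // /negbT.
by move/memN_msupp_eq0 => ->.
Qed.

Lemma compS_homP w p : ishom cS w p <-> (forall m, m \in msupp p -> dg m = w).
Proof.
split.
  move=> h m; rewrite mcoeff_msupp -h compS_coef.
  by case: (eqVneq (dg m) w) => // _; rewrite eqxx.
move=> h; apply/mpolyP => m; rewrite compS_coef; case: eqP => // ne.
by apply/esym/memN_msupp_eq0; apply/negP => /h.
Qed.

Lemma compS_hom_mdeg w p m : ishom cS w p -> m \in msupp p -> dg m = w.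
Proof. by move=> /compS_homP; apply. Qed.

Lemma compS_homX m : ishom cS (dg m) 'X_[m].
Proof. by apply/compS_homP => m'; rewrite msuppX mem_seq1 => /eqP ->. Qed.

Lemma compS_homXU i : ishom cS (Q i) 'X_i.
Proof. by rewrite -mdegKU; apply: compS_homX. Qed.

Lemma compS_grading : is_grading cS.
Proof.
split.
- move=> w a x y; apply/mpolyP => m.
  by rewrite mcoeffD mcoeffZ !compS_coef mcoeffD mcoeffZ; case: ifP; rewrite ?mulr0 ?addr0.
- move=> x; exists (undup (map dg (msupp x))); split; first exact: undup_uniq.
    apply/mpolyP => m; rewrite raddf_sum /=.
    rewrite (eq_bigr (fun w => if w == dg m then x@_m else 0)); last first.
      by move=> w _; rewrite compS_coef eq_sym.
    rewrite big_uniq_if_eq ?undup_uniq // mem_undup; case: ifP => // /negbT.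
    move=> h; apply: memN_msupp_eq0; apply: contra h => hm; exact: map_f.
  move=> w hw; apply/mpolyP => m; rewrite compS_coef mcoeff0; case: eqP => // ew.
  apply: memN_msupp_eq0; apply: contra hw => hm; rewrite mem_undup -ew; exact: map_f.
- move=> w w' x; apply/mpolyP => m; rewrite !compS_coef.
  case: (eqVneq w w') => [->|ne]; first by rewrite compS_coef; case: (_ == _).
  rewrite mcoeff0; case: eqP => // ew; case: eqP => // ew'.
  by move: ne; rewrite -ew -ew' eqxx.
- move=> u v x y /compS_homP hx /compS_homP hy; apply/compS_homP => m /msuppM_le.
  by case/allpairsP => [[m1 m2] /= [h1 h2 ->]]; rewrite mdegKD hx // hy.
Qed.

Lemma compS_hom1 : ishom cS 0 1.
Proof. by rewrite -mdegK0 -mpolyX0; apply: compS_homX. Qed.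

Lemma compS_hom_prod (I : Type) (s : seq I) (f : I -> {mpoly F[r]}) (d : I -> K) :
  (forall i, ishom cS (d i) (f i)) -> ishom cS (\sum_(i <- s) d i) (\prod_(i <- s) f i).
Proof.
move=> h; elim: s => [|i s IH]; rewrite ?big_nil ?big_cons; first exact: compS_hom1.
exact: (ishomM compS_grading).
Qed.

Lemma compS_homX_pow w p k : ishom cS w p -> ishom cS (w *+ k) (p ^+ k).
Proof.
move=> h; case: k => [|k]; first by rewrite expr0 mulr0n; apply: compS_hom1.
exact: (ishom_expS compS_grading).
Qed.

(* A monomial of total degree 1 can only come from a single generator, whose
   degree differs from [w]. *)
Lemma Alt_mdeg1 w x : Alt cS w x -> forall m, m \in msupp x -> mdeg m = 1%N -> dg m != w.
Proof.
elim => {x} [c|x [w' [[_ nw] hx]]|x y _ IHx _ IHy|x y _ IHx _ IHy] m.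
- rewrite alg_mpolyC msuppC; case: eqP => // _; rewrite mem_seq1 => /eqP ->.
  by rewrite mdeg0.
- by move=> hm _; rewrite (compS_hom_mdeg hx hm); apply/eqP.
- by move/msuppD_le; rewrite mem_cat => /orP [/IHx|/IHy].
- move/msuppM_le => /allpairsP [[m1 m2] /= [h1 h2 ->]].
  rewrite mdegD; case: (eqVneq m1 0%MM) => [->|n1].
    by rewrite add0m mdeg0; apply: IHy.
  case: (eqVneq m2 0%MM) => [->|n2]; first by rewrite addm0 mdeg0 addn0; apply: IHx.
  rewrite -mdeg_eq0 -lt0n in n1; rewrite -mdeg_eq0 -lt0n in n2.
  by case: (mdeg m1) n1 => // a _; case: (mdeg m2) n2 => // b _; rewrite addSn addnS.
Qed.

Lemma Alt_sum w I (s : seq I) (f : I -> {mpoly F[r]}) :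
  (forall i, Alt cS w (f i)) -> Alt cS w (\sum_(i <- s) f i).
Proof.
move=> h; elim: s => [|i s IH]; rewrite ?big_nil ?big_cons; last exact: gs_add (h i) IH.
by rewrite -(scale0r 1); apply: gs_scal.
Qed.

End MonomialGrading.

Section Presentation.
Variables (F : closedFieldType) (K : zmodType) (R : comAlgType F)
  (compR : K -> R -> R) (r : nat) (Q : 'I_r -> K) (pi : {mpoly F[r]} -> R).
Hypotheses (hR : integral_ring R) (hgr : is_grading compR) (hpt : pointed compR)
  (hpi : min_presentation compR Q pi).
Local Notation S := {mpoly F[r]}.
Local Notation dg := (mdegK Q).
Local Notation cS := (compS (F:=F) Q).
Local Notation gS := (compS_grading F Q).

Lemma pi_ahom : ahom pi.
Proof. by case: hpi. Qed.

Lemma pi_surj x : exists p, pi p = x.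
Proof. by case: hpi => _ h _ _; apply: h. Qed.

Lemma pi_hom w p : ishom cS w p -> ishom compR w (pi p).
Proof. by case: hpi => _ _ h _; apply: h. Qed.

Lemma pi_ker_mdeg p : pi p = 0 -> forall m, m \in msupp p -> (2 <= mdeg m)%N.
Proof. by case: hpi => _ _ _ h; apply: h. Qed.

Local Notation pah := pi_ahom.

Lemma pi_comp w p : compR w (pi p) = pi (cS w p).
Proof. by apply: (comp_morph gS hgr pah (@inj_id K)); apply: pi_hom. Qed.

Lemma pi_lift_hom w y : ishom compR w y -> exists p, ishom cS w p /\ pi p = y.
Proof.
move=> hy; have [p0 ep] := pi_surj y; exists (cS w p0).
by split; [exact: ishom_comp gS _ _ | rewrite -pi_comp ep].
Qed.

Lemma ex_pi_lift (x : R) : exists p, pi p == x.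
Proof. by have [p hp] := pi_surj x; exists p; apply/eqP. Qed.

Definition pi_lift (x : R) : S := xchoose (ex_pi_lift x).

Lemma pi_liftK x : pi (pi_lift x) = x.
Proof. exact/eqP/(xchooseP (ex_pi_lift x)). Qed.

Lemma piX_neq0 i : pi 'X_i != 0.
Proof.
apply/eqP => /pi_ker_mdeg /(_ U_(i)%MM).
by rewrite msuppX mem_seq1 eqxx mdeg1 => /(_ isT).
Qed.

Lemma piXm_neq0 m : pi 'X_[m] != 0.
Proof.
rewrite mpolyXE_id (ahom_prod pah); apply/eqP => /(integral_prod_eq0 hR) [i _].
by rewrite (ahomX pah) => /(integral_expr_eq0 hR); apply/eqP/piX_neq0.
Qed.

Lemma piX_not_scalar i (c : F) : pi 'X_i != c%:A.
Proof.
apply/eqP => h.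
have h0 : pi ('X_i - c%:MP) = 0 by rewrite -alg_mpolyC (ahomB pah) (ahom_alg pah) h subrr.
suff: (2 <= mdeg (U_(i) : 'X_{1..r}))%N by rewrite mdeg1.
apply: (pi_ker_mdeg h0).
by rewrite mcoeff_msupp mcoeffB mcoeffX eqxx mcoeffC mnm1_eq0 mulr0 subr0 oner_eq0.
Qed.

Lemma pi_homX i : ishom compR (Q i) (pi 'X_i).
Proof. exact/pi_hom/compS_homXU. Qed.

Lemma weightQ i : weight compR (Q i).
Proof. by exists (pi 'X_i); split; [apply: piX_neq0 | apply: pi_homX]. Qed.

Lemma weightSR w : weight cS w <-> weight compR w.
Proof.
split; case=> x [nx hx].
  have : msupp x != [::] by rewrite msupp_eq0.
  case E: (msupp x) => [//|m s] _.
  have <- : dg m = w by apply: (compS_hom_mdeg hx); rewrite E mem_head.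
  by exists (pi 'X_[m]); split; [apply: piXm_neq0 | apply/pi_hom/compS_homX].
have [p [hp ep]] := pi_lift_hom hx; exists p; split => //.
by apply: contra nx => /eqP p0; rewrite -ep p0 (ahom0 pah).
Qed.

Lemma in_cone_mdegK m : in_cone compR (dg m).
Proof.
exists 1%N, 1%N, (flatten [seq nseq (m i) (Q i) | i <- index_enum 'I_r]); split => //.
  by move=> w /flattenP [s /mapP [i _ ->]] /nseqP [-> _]; apply: weightQ.
rewrite big_flatten /= big_map (eq_bigr (fun i => Q i *+ m i)).
  by rewrite !mulr1n subrr.
by move=> i _; elim: (m i) => [|k IH]; rewrite ?big_nil //= big_cons IH mulrS.
Qed.

Lemma mdegK_neq0 m : m != 0%MM -> dg m != 0.
Proof.
case/mnm_neq0_split => j em; apply/eqP => dm.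
have dm' : dg (m - U_(j))%MM = - Q j.
  by apply/eqP; rewrite -subr_eq0 opprK -(mdegKU Q j) -mdegKD -em dm.
have [N [N0 QjN]] : exists N : nat, (0 < N)%N /\ Q j *+ N = 0.
  case: hpt => _; apply; first exact/in_cone_weight/weightQ.
  by rewrite -dm'; apply: in_cone_mdegK.
have [c hc] := pointed_torsion_pow hgr hpt N0 QjN (pi_homX j).
have [z hz] := integral_root_of_scalar hR N0 hc.
by move: (piX_not_scalar j z); rewrite hz eqxx.
Qed.

Lemma wlt_mdegK m1 m2 : m2 != 0%MM -> wlt cS (dg m1) (dg (m1 + m2)%MM).
Proof.
move=> nm2; split; last first.
  move/eqP; rewrite mdegKD -subr_eq0 opprD addrA subrr sub0r oppr_eq0.
  by rewrite (negbTE (mdegK_neq0 nm2)).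
rewrite /wle mdegKD addrAC subrr add0r; exists 'X_[m2]; split; last exact: compS_homX.
by rewrite -msupp_eq0 msuppX.
Qed.

Lemma Alt_monomial m : mdeg m != 1%N -> Alt cS (dg m) 'X_[m].
Proof.
move=> nm1; case: (eqVneq m 0%MM) => [->|nm0].
  by rewrite mpolyX0 -(scale1r 1); apply: gs_scal.
have [j em] := mnm_neq0_split nm0.
have nm' : (m - U_(j))%MM != 0%MM.
  by apply: contra nm1 => /eqP e; rewrite em e add0m mdeg1.
rewrite [in X in Alt _ _ X]em mpolyXD.
apply: gs_mul; apply: gs_gen.
- exists (dg (m - U_(j))%MM); split; last exact: compS_homX.
  by have := wlt_mdegK (m - U_(j))%MM (negbT (mnm1_eq0 j)); rewrite -em.
- exists (dg U_(j)%MM); split; last by rewrite mdegKU; apply: compS_homXU.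
  by have := wlt_mdegK U_(j)%MM nm'; rewrite addmC -em.
Qed.

Lemma Alt_pi w x : Alt cS w x -> Alt compR w (pi x).
Proof.
elim => {x} [c|x [w' [[hw nw] hx]]|x y _ IHx _ IHy|x y _ IHx _ IHy].
- by rewrite (ahom_alg pah); apply: gs_scal.
- by apply: gs_gen; exists w'; split; [split => //; apply/weightSR | apply: pi_hom].
- by rewrite (ahomD pah); apply: gs_add.
- by rewrite (ahomM pah); apply: gs_mul.
Qed.

Lemma Alt_lift w y : Alt compR w y -> exists p, Alt cS w p /\ pi p = y.
Proof.
elim => {y} [c|y [w' [[hw nw] hy]]|x y _ [p [hp <-]] _ [q [hq <-]]|x y _ [p [hp <-]] _ [q [hq <-]]].
- by exists c%:A; split; [apply: gs_scal | rewrite (ahom_alg pah)].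
- have [p [hp ep]] := pi_lift_hom hy; exists p; split => //.
  by apply: gs_gen; exists w'; split => //; split => //; apply/weightSR.
- by exists (p + q); split; [apply: gs_add | rewrite (ahomD pah)].
- by exists (p * q); split; [apply: gs_mul | rewrite (ahomM pah)].
Qed.

Lemma OmegaR_S w : Omega compR w -> Omega cS w.
Proof.
case=> [[x [nx hx]] [y [hy ny]]]; split.
  have [p [hp ep]] := pi_lift_hom hx; exists p; split => //.
  by apply: contra nx => /eqP p0; rewrite -ep p0 (ahom0 pah).
have [p [hp ep]] := pi_lift_hom hy; exists p; split => // /Alt_pi.
by rewrite ep.
Qed.

Lemma OmegaS_Q w : Omega cS w -> exists i, Q i = w.
Proof.
case=> _ [p [hp np]].
have [|/hasPn no_lin] := boolP (has (fun m => mdeg m == 1%N) (msupp p)).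
  case/hasP => m hm /mdeg1P [i /eqP ei]; exists i.
  by rewrite -mdegKU -ei; exact: compS_hom_mdeg hp hm.
exfalso; apply: np; rewrite (mpolyE p); apply: Alt_sum => m.
case: (boolP (m \in msupp p)) => hm; last first.
  by rewrite memN_msupp_eq0 // scale0r -(scale0r 1); apply: gs_scal.
rewrite -mul_mpolyC -alg_mpolyC; apply: gs_mul; first exact: gs_scal.
rewrite -(compS_hom_mdeg hp hm); apply: Alt_monomial; exact: no_lin.
Qed.

Lemma OmegaQ_R i : Omega compR (Q i).
Proof.
split; first by exists (pi 'X_i); split; [apply: piX_neq0 | apply: pi_homX].
exists (pi 'X_i); split; first exact: pi_homX.
move/Alt_lift => [q [hq eq]].
have h0 : pi ('X_i - q) = 0 by rewrite (ahomB pah) eq subrr.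
suff: (2 <= mdeg (U_(i) : 'X_{1..r}))%N by rewrite mdeg1.
apply: (pi_ker_mdeg h0).
have q0 : q@_U_(i) = 0.
  apply: memN_msupp_eq0; apply/negP => hm.
  by move: (Alt_mdeg1 hq hm (mdeg1 _)); rewrite mdegKU eqxx.
by rewrite mcoeff_msupp mcoeffB mcoeffX eqxx q0 subr0 oner_eq0.
Qed.

Lemma OmegaSR w : Omega cS w <-> Omega compR w.
Proof. by split; [case/OmegaS_Q => i <-; apply: OmegaQ_R | apply: OmegaR_S]. Qed.

Section Unitriangular.
Variable t : r.-tuple S.
Hypothesis ht : forall i, ishom cS (Q i) (tnth t i - 'X_i) /\ pi (tnth t i - 'X_i) = 0.

Let f i := tnth t i - 'X_i.
Let dep : rel 'I_r := fun j i => occurs j (f i).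

(* Every monomial of [f i] has total degree at least 2, so removing the
   factor [T_j] leaves a nonconstant monomial. *)
Lemma dep_mdegK j i : dep j i -> exists2 m : 'X_{1..r}, m != 0%MM & Q i = Q j + dg m.
Proof.
case/hasP => m hm mj; have [fi_hom fi_ker] := ht i.
have m2 := pi_ker_mdeg fi_ker hm.
have em : m = (m - U_(j) + U_(j))%MM by rewrite submK // lep1mP -lt0n.
exists (m - U_(j))%MM; last by rewrite -(compS_hom_mdeg fi_hom hm) {1}em mdegKD mdegKU addrC.
by apply: contraTneq m2 => e; rewrite em e add0m mdeg1.
Qed.

Lemma connect_dep_mdegK i j : connect dep i j -> exists m : 'X_{1..r}, Q j = Q i + dg m.
Proof.
case/connectP => p; elim: p i => [|k p IH] i /=.
  by move=> _ ->; exists 0%MM; rewrite mdegK0 addr0.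
case/andP => ik kp ej; have [m1 _ e1] := dep_mdegK ik.
by have [m2 e2] := IH _ kp ej; exists (m1 + m2)%MM; rewrite e2 e1 mdegKD addrA.
Qed.

Lemma dep_acyclic j i : dep j i -> ~~ connect dep i j.
Proof.
move=> ji; apply/negP => /connect_dep_mdegK [m2 e2]; have [m1 nm1 e1] := dep_mdegK ji.
have : dg (m1 + m2)%MM != 0.
  apply: mdegK_neq0; apply: contra nm1 => /eqP/mnmP m0.
  by apply/eqP/mnmP => k; move: (m0 k); rewrite mnmDE mnm0E => /eqP; rewrite addn_eq0 => /andP[/eqP].
apply/negP; rewrite negbK mdegKD addrC; apply/eqP.
by apply: (@addrI _ (Q i)); rewrite addr0 {2}e1 e2 addrA.
Qed.

Let height i := #|[set k | connect dep k i]|.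

Lemma height_lt j i : dep j i -> (height j < height i)%N.
Proof.
move=> ji; apply: proper_card; apply/properP; split.
  by apply/subsetP => k; rewrite !inE => kj; apply: connect_trans kj (connect1 ji).
by exists i; rewrite !inE ?connect0 // (negbTE (dep_acyclic ji)).
Qed.

Lemma height_le i : (height i <= r)%N.
Proof. by rewrite /height -[X in (_ <= X)%N]card_ord max_card. Qed.

(* The fixed point of [u |-> (T_i - f_i(u))_i], reached after [r + 1] steps. *)
Fixpoint inv_approx (k : nat) : r.-tuple S :=
  if k is k'.+1 then [tuple 'X_i - (f i \mPo inv_approx k') | i < r]
  else [tuple 'X_i | i < r].

Lemma inv_approx_stable k i : (height i < k)%N -> tnth (inv_approx k) i = tnth (inv_approx k.+1) i.
Proof.
elim: k i => [//|k IH] i hi /=; rewrite !tnth_mktuple; congr (_ - _).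
by apply: comp_mpoly_eq_occurring => j /height_lt ji; apply: IH; apply: leq_trans ji _.
Qed.

Let inv := inv_approx r.+1.

Lemma inv_fix i : tnth inv i + (f i \mPo inv) = 'X_i.
Proof. by rewrite {1}/inv inv_approx_stable ?ltnS ?height_le //= tnth_mktuple subrK. Qed.

Lemma subst_inv p : (p \mPo t) \mPo inv = p.
Proof.
rewrite -[RHS](comp_mpoly_id p); apply: (ahom_mpoly_eq (A := {mpoly F[r]}) (f := comp_mpoly inv \o comp_mpoly t)).
- exact: ahom_comp (ahom_comp_mpoly t) (ahom_comp_mpoly inv).
- exact: ahom_comp_mpoly.
move=> i /=; rewrite !comp_mpolyXt tnth_mktuple.
by rewrite -[tnth t i](subrK 'X_i) addrC comp_mpolyD comp_mpolyXt inv_fix.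
Qed.

Lemma subst_surj q : exists p, p \mPo t = q.
Proof.
have hX k i : (height i < k)%N -> exists p, p \mPo t = 'X_i.
  elim: k i => [//|k IH] i hi.
  have [p ep] : exists p, p \mPo t = f i.
    apply: ahom_range_mpoly (ahom_comp_mpoly t) _ => j /height_lt ji.
    by apply: IH; apply: leq_trans ji hi.
  by exists ('X_i - p); rewrite comp_mpolyB comp_mpolyXt ep /f opprB addrC subrK.
by apply: ahom_range_mpoly (ahom_comp_mpoly t) _ => j _; apply: hX (ltnSn _).
Qed.

Lemma subst_bij : bijective (comp_mpoly t).
Proof.
exists (comp_mpoly inv); first exact: subst_inv.
by move=> q; have [p <-] := subst_surj q; rewrite /= subst_inv.
Qed.

End Unitriangular.

Definition Vomega := dsum_over cS (Omega cS).

Lemma Vomega0 : Vomega 0.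
Proof. by move=> w _; apply: gr0 gS _. Qed.

Lemma VomegaD v v' : Vomega v -> Vomega v' -> Vomega (v + v').
Proof. by move=> hv hv' w hw; rewrite (grD gS) hv // hv' // addr0. Qed.

Lemma VomegaB v v' : Vomega v -> Vomega v' -> Vomega (v - v').
Proof. by move=> hv hv' w hw; rewrite (grB gS) hv // hv' // subrr. Qed.

Lemma VomegaX i : Vomega 'X_i.
Proof.
move=> u hu; rewrite (comp_ishom gS u (@compS_homXU F K r Q i)).
by case: eqP => // e; case: hu; rewrite e; apply: OmegaR_S (OmegaQ_R i).
Qed.

Lemma Vomega_graded_aut phi psi v : graded_aut cS phi psi -> Vomega v -> Vomega (phi v).
Proof.
move=> ga hv u hu; have [psi' psiK psiK'] := graded_aut_psi_bij ga.
have hphi := graded_aut_ahom ga.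
rewrite -(psiK' u) (comp_morph gS gS hphi (graded_aut_psi_inj ga) (graded_aut_hom ga)).
rewrite hv ?(ahom0 hphi) // => hO; apply: hu.
by rewrite -(psiK' u); apply: graded_aut_Omega ga _ hO.
Qed.

Lemma Vomega_lift_hom w y : ishom compR w y -> (~ Omega compR w -> y = 0) ->
  exists v, Vomega v /\ pi v = y.
Proof.
move=> hy hO; case: (eqVneq y 0) => [->|ny].
  by exists 0; split; [exact: Vomega0 | rewrite (ahom0 pah)].
have [p [hp <-]] := pi_lift_hom hy; exists p; split => // u hu.
rewrite (comp_ishom gS u hp); case: eqP => // e; move: ny; rewrite hO ?eqxx //.
by move/OmegaR_S; rewrite -e.
Qed.

Lemma pi_Vomega x : dsum_over compR (Omega compR) x <-> exists v, Vomega v /\ pi v = x.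
Proof.
split => [hx|[v [hv <-]] w hw].
  have [s [_ -> _]] := gr_decomp hgr x.
  apply: (big_ind (fun y => exists v, Vomega v /\ pi v = y)).
  - by exists 0; split; [exact: Vomega0 | rewrite (ahom0 pah)].
  - move=> _ _ [v [hv <-]] [v' [hv' <-]].
    by exists (v + v'); split; [exact: VomegaD | rewrite (ahomD pah)].
  - by move=> w _; apply: Vomega_lift_hom (ishom_comp hgr w x) (hx w).
by rewrite pi_comp hv ?(ahom0 pah) // => /OmegaSR.
Qed.

Definition ker_stable (g : S -> S) := forall f, pi f = 0 -> pi (g f) = 0.

Definition descend (g : S -> S) (x : R) : R := pi (g (pi_lift x)).

Lemma descendE g p : ahom g -> ker_stable g -> descend g (pi p) = pi (g p).
Proof.
move=> hg gI; apply/eqP; rewrite -subr_eq0 -(ahomB pah) -(ahomB hg) gI //.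
by rewrite (ahomB pah) pi_liftK subrr.
Qed.

Lemma descend_ahom g : ahom g -> ker_stable g -> ahom (descend g).
Proof.
move=> hg gI; have dE p := descendE p hg gI.
split => [a x y|x y|].
- have [p <-] := pi_surj x; have [q <-] := pi_surj y.
  by rewrite -(ahomZ pah) -(ahomD pah) !dE (ahomD hg) (ahomZ hg) (ahomD pah) (ahomZ pah).
- have [p <-] := pi_surj x; have [q <-] := pi_surj y.
  by rewrite -(ahomM pah) !dE (ahomM hg) (ahomM pah).
- by rewrite -(ahom1 pah) dE (ahom1 hg).
Qed.

Lemma in_stab_graded_aut g : in_stab Q pi g -> graded_aut cS g.1 g.2.
Proof. by case. Qed.

Lemma in_stab_ahom g : in_stab Q pi g -> ahom g.1.
Proof. by move/in_stab_graded_aut/graded_aut_ahom. Qed.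

Lemma in_stab_ker g : in_stab Q pi g -> ker_stable g.1.
Proof. by case. Qed.

Lemma in_stab_inv g : in_stab Q pi g -> exists g' : S -> S,
  [/\ cancel g.1 g', cancel g' g.1, ahom g' & ker_stable g'].
Proof.
case=> ga _ gI; have [g' gK gK'] := graded_aut_bij ga; exists g'; split => //.
  exact: ahom_can (graded_aut_ahom ga) gK gK'.
by move=> f /gI [f' [hf' <-]]; rewrite gK.
Qed.

Definition induced (g : (S -> S) * (K -> K)) : (R -> R) * (K -> K) := (descend g.1, g.2).

Lemma inducedE g p : in_stab Q pi g -> (induced g).1 (pi p) = pi (g.1 p).
Proof. by move=> hg; apply: descendE (in_stab_ahom hg) (in_stab_ker hg). Qed.

Lemma induced_graded_aut g : in_stab Q pi g -> graded_aut compR (induced g).1 (induced g).2.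
Proof.
move=> hg; have ga := in_stab_graded_aut hg; have dE p := inducedE p hg.
have [g' [gK gK' hg' g'I]] := in_stab_inv hg.
apply: (graded_aut_of_bij hgr).
- exact: descend_ahom (in_stab_ahom hg) (in_stab_ker hg).
- exists (descend g') => x; have [p <-] := pi_surj x.
    by rewrite dE (descendE _ hg' g'I) gK.
  by rewrite (descendE _ hg' g'I) dE gK'.
- exact: graded_aut_psiD ga.
- exact: graded_aut_psi_bij ga.
- move=> w x hx; have [p [hp <-]] := pi_lift_hom hx.
  by rewrite dE; apply/pi_hom/(graded_aut_hom ga).
Qed.

Lemma induced_comp g h : in_stab Q pi g -> in_stab Q pi h ->
  paireq (induced (paircomp g h)) (paircomp (induced g) (induced h)).
Proof.
move=> hg hh; split => // x; have [p <-] := pi_surj x.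
have gh_ker : ker_stable (g.1 \o h.1) by move=> f /(in_stab_ker hh) /(in_stab_ker hg).
rewrite /= (descendE _ (ahom_comp (in_stab_ahom hh) (in_stab_ahom hg)) gh_ker).
by rewrite (descendE _ (in_stab_ahom hh) (in_stab_ker hh)) (descendE _ (in_stab_ahom hg) (in_stab_ker hg)).
Qed.

Lemma induced_eq_iff (heff : effective compR) g h : in_stab Q pi g -> in_stab Q pi h ->
  paireq (induced g) (induced h) <->
  forall v, Vomega v -> Vomega (g.1 v - h.1 v) /\ pi (g.1 v - h.1 v) = 0.
Proof.
move=> hg hh; have ga := in_stab_graded_aut hg; have ha := in_stab_graded_aut hh.
split => [[e1 _] v hv|gh].
  by split; [apply: VomegaB; [exact: Vomega_graded_aut ga hv | exact: Vomega_graded_aut ha hv] |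
    rewrite (ahomB pah) -!inducedE // e1 subrr].
have e1 x : (induced g).1 x = (induced h).1 x.
  have [p <-] := pi_surj x; rewrite !inducedE //; move: p.
  apply: ahom_mpoly_eq (ahom_comp (in_stab_ahom hg) pah) (ahom_comp (in_stab_ahom hh) pah) _ => i /=.
  by apply/eqP; rewrite -subr_eq0 -(ahomB pah) (gh _ (VomegaX i)).2.
split => //=; apply: (effective_additive_eq heff (graded_aut_psiD ga) (graded_aut_psiD ha)).
move=> w [x [nx hx]].
have gi := induced_graded_aut hg; have hi := induced_graded_aut hh.
apply: (ishom_uniq hgr (graded_aut_hom gi hx)); last exact: (graded_aut_neq0 gi nx).
by have := graded_aut_hom hi hx; rewrite -e1.
Qed.

Definition aut_lift (phi : R -> R) (psi : K -> K) : S -> S :=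
  comp_mpoly [tuple cS (psi (Q i)) (pi_lift (phi (pi 'X_i))) | i < r].

Section AutLift.
Variables (phi : R -> R) (psi : K -> K).
Hypothesis ga : graded_aut compR phi psi.

Lemma pi_aut_lift p : pi (aut_lift phi psi p) = phi (pi p).
Proof.
move: p; apply: ahom_mpoly_eq (ahom_comp (ahom_comp_mpoly _) pah) (ahom_comp pah (graded_aut_ahom ga)) _.
move=> i /=; rewrite comp_mpolyXt tnth_mktuple -pi_comp pi_liftK.
exact/(graded_aut_hom ga)/pi_homX.
Qed.

Lemma aut_lift_hom w p : ishom cS w p -> ishom cS (psi w) (aut_lift phi psi p).
Proof.
have psiD := graded_aut_psiD ga.
move=> hp; rewrite /aut_lift comp_mpolyE big_seq; apply: (ishom_sum gS) => m hm.
apply: (ishomZ gS); rewrite -(compS_hom_mdeg hp hm) /mdegK (additive_sum psiD).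
apply: compS_hom_prod => i /=; rewrite tnth_mktuple (additiveMn psiD).
exact/compS_homX_pow/ishom_comp/gS.
Qed.

End AutLift.

(* The composite of the lifts of [phi] and [phi^-1] is a unitriangular
   substitution. *)
Lemma aut_lift_comp_bij phi psi phi' psi' :
  graded_aut compR phi psi -> graded_aut compR phi' psi' ->
  cancel phi' phi -> cancel psi' psi ->
  bijective (aut_lift phi psi \o aut_lift phi' psi').
Proof.
move=> ga ga' phiK psiK.
pose t := [tuple aut_lift phi psi (aut_lift phi' psi' 'X_i) | i < r].
apply: (eq_bij (f := comp_mpoly t)); last first.
  apply: ahom_mpoly_eq (ahom_comp_mpoly t) (ahom_comp (ahom_comp_mpoly _) (ahom_comp_mpoly _)) _.
  by move=> i; rewrite comp_mpolyXt tnth_mktuple.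
apply: subst_bij => i; rewrite tnth_mktuple; split.
  apply: (ishomB gS); last exact: compS_homXU.
  by rewrite -{1}(psiK (Q i)); apply/(aut_lift_hom ga)/(aut_lift_hom ga')/compS_homXU.
by rewrite (ahomB pah) (pi_aut_lift ga) (pi_aut_lift ga') phiK subrr.
Qed.

Section AutLiftAut.
Variables (phi : R -> R) (psi : K -> K).
Hypothesis ga : graded_aut compR phi psi.

Lemma aut_lift_graded_aut : graded_aut cS (aut_lift phi psi) psi.
Proof.
have [phi' phiK phiK'] := graded_aut_bij ga; have [psi' psiK psiK'] := graded_aut_psi_bij ga.
have ga' := graded_aut_inv hgr ga phiK phiK' psiK psiK'.
apply: (graded_aut_of_bij gS) (graded_aut_psiD ga) (graded_aut_psi_bij ga) (aut_lift_hom ga).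
- exact: ahom_comp_mpoly.
apply: (bij_of_comp_bij (h := aut_lift phi' psi')).
- exact: aut_lift_comp_bij ga ga' phiK' psiK'.
- exact: aut_lift_comp_bij ga' ga phiK psiK.
Qed.

Lemma aut_lift_in_stab : in_stab Q pi (aut_lift phi psi, psi).
Proof.
have gaS := aut_lift_graded_aut; split => //= f hf.
  by rewrite (pi_aut_lift ga) hf (ahom0 (graded_aut_ahom ga)).
have [g _ gK'] := graded_aut_bij gaS; exists (g f); split; last exact: gK'.
by apply: (graded_aut_inj ga); rewrite -(pi_aut_lift ga) gK' hf (ahom0 (graded_aut_ahom ga)).
Qed.

Lemma induced_aut_lift : paireq (induced (aut_lift phi psi, psi)) (phi, psi).
Proof. by split => // x /=; rewrite /descend (pi_aut_lift ga) pi_liftK. Qed.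

End AutLiftAut.

End Presentation.

Unset Implicit Arguments.

Theorem proposition2p9
  (F : closedFieldType) (hchar : [pchar F] =i pred0)
  (K : zmodType) (hK : fingen_group K)
  (R : comAlgType F) (hR : integral_ring R)
  (compR : K -> R -> R) (hgr : is_grading compR)
  (heff : effective compR) (hpt : pointed compR)
  (r : nat) (Q : 'I_r -> K) (pi : {mpoly F[r]} -> R)
  (hpi : min_presentation compR Q pi) :
  let V := dsum_over (compS Q) (Omega (compS (F:=F) Q)) in
  let IV := fun v => V v /\ pi v = 0 in
  ((forall x : R, dsum_over compR (Omega compR) x <-> exists v, V v /\ pi v = x) /\
   (forall v v', V v -> V v' -> pi v = pi v' -> IV (v - v'))) /\
  (forall g, in_stab Q pi g -> forall v, (V v -> V (g.1 v)) /\ (IV v -> IV (g.1 v))) /\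
  (exists Phi : (({mpoly F[r]} -> {mpoly F[r]}) * (K -> K)) -> ((R -> R) * (K -> K)),
    [/\ (forall g, in_stab Q pi g -> graded_aut compR (Phi g).1 (Phi g).2),
        (forall g h, in_stab Q pi g -> in_stab Q pi h ->
            paireq (Phi (paircomp g h)) (paircomp (Phi g) (Phi h))),
        (forall a, graded_aut compR a.1 a.2 -> exists g, in_stab Q pi g /\ paireq (Phi g) a) &
        (forall g h, in_stab Q pi g -> in_stab Q pi h ->
            (paireq (Phi g) (Phi h) <-> forall v, V v -> IV (g.1 v - h.1 v)))]).
Proof.
move=> V IV; split; [split|split].
- exact: pi_Vomega hR hgr hpt hpi.
- move=> v v' hv hv' e; split; first exact: VomegaB.
  by rewrite (ahomB (pi_ahom hpi)) e subrr.
- move=> g hg v; have ga := in_stab_graded_aut hg.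
  split => [|[hv hv0]]; first exact: Vomega_graded_aut ga.
  by split; [exact: Vomega_graded_aut ga hv | exact: in_stab_ker hg _ hv0].
- exists (induced hpi); split.
  + exact: induced_graded_aut hgr hpi.
  + exact: induced_comp hpi.
  + case=> phi psi /= ga; exists (aut_lift hpi phi psi, psi).
    by split; [apply: (aut_lift_in_stab hR hgr hpt hpi ga) | apply: (induced_aut_lift hgr hpi ga)].
  + by move=> g h hg hh; apply: (induced_eq_iff hR hgr hpi heff hg hh).
Qed.
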